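(* Let $q$ be a prime, $A$ a group of exponent $q$ and order $q^3$. Suppose $A$ acts by automorphisms on a finite group $G$ of order coprime to $q$ with $G=PH$, where $P$ and $H$ are $A$-invariant subgroups, $P$ is a normal $p$-subgroup of $G$ for a prime $p$, and $H$ is a nilpotent $p'$-subgroup. Let $N$ be a normal subgroup of $P$ that is invariant under both $H$ and $A$. Assume that $P=[P,H]$ and $|[N,H]|=p^n$. Then $N\le Z_{2n+1}(P)$.
   Context: $Z_i(P)$ denotes the $i$-th term of the upper central series of $P$; $[X,Y]$ is the subgroup generated by commutators of elements of $X$ and $Y$. *)

From mathcomp Require Import all_boot all_fingroup all_solvable.

(** Write K = [N, H]. If [K <= Z_i(P)], the three subgroup lemma modulo
    [Z_i(P)], together with [P = [P, H]], gives [[N, P] <= Z_i(P)], i.e.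
    [N <= Z_(i+1)(P)]. Applied to [N :&: Z_(i+2)(P)], the same argument shows
    that as long as [K] is not contained in [Z_i(P)], the intersection
    [K :&: Z_i(P)] is strictly smaller than [K :&: Z_(i+2)(P)]. Since [K] has
    order [p^n], the chain [K :&: Z_(2j)(P)] must reach [K] by [j = n], so
    [K <= Z_(2n)(P)] and hence [N <= Z_(2n+1)(P)]. *)
From mathcomp Require Import all_boot all_fingroup all_solvable.
Set Implicit Arguments.
Unset Strict Implicit.
Unset Printing Implicit Defensive.
Local Open Scope group_scope.

Section UpperCentralSeries.
Variable gT : finGroupType.
Implicit Types (G H K N P Z : {group gT}) (p : nat).

Lemma three_subgroup_mod G H K Z :
    G \subset 'N(Z) -> H \subset 'N(Z) -> K \subset 'N(Z) ->
  [~: G, H, K] \subset Z -> [~: H, K, G] \subset Z -> [~: K, G, H] \subset Z.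
Proof.
move=> nZG nZH nZK sGHK sHKG.
have nZ_comm (A B : {set gT}) :
  A \subset 'N(Z) -> B \subset 'N(Z) -> [~: A, B] \subset 'N(Z).
  exact: comm_subG.
rewrite -quotient_sub1 ?nZ_comm // !quotientR ?nZ_comm //.
apply/trivgP/(@three_subgroup _ (G / Z)%G (H / Z)%G (K / Z)%G); apply/trivgP.
  by rewrite /= -!quotientR ?nZ_comm // quotient_sub1 ?nZ_comm.
by rewrite /= -!quotientR ?nZ_comm // quotient_sub1 ?nZ_comm.
Qed.

Lemma sub_ucnS i N P :
  N \subset P -> (N \subset 'Z_i.+1(P)) = ([~: N, P] \subset 'Z_i(P)).
Proof.
move=> sNP; apply/idP/idP => [sNZ | sNPZ].
  exact: subset_trans (commSg P sNZ) (ucn_comm i P).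
rewrite ucnSnR; apply/subsetP => x Nx; rewrite inE (subsetP sNP) //=.
by apply: subset_trans sNPZ; rewrite commSg ?sub1set.
Qed.

Lemma sub_ucn_meetS i N P : nilpotent P -> N \subset P -> P \subset 'N(N) ->
  N :&: 'Z_i.+1(P) \subset 'Z_i(P) -> N \subset 'Z_i(P).
Proof.
move=> nilP sNP nNP sNZ.
have sNZ_up t : N :&: 'Z_(t + i.+1)(P) \subset 'Z_i(P).
  elim: t => [|t IHt] //; rewrite addSn.
  have sMP : N :&: 'Z_(t + i.+1).+1(P) \subset P by rewrite subIset ?sNP.
  apply: subset_trans sNZ; rewrite subsetI subsetIl /=.
  rewrite sub_ucnS //; apply: subset_trans IHt; rewrite subsetI.
  rewrite (subset_trans (commSg _ (subsetIl _ _))) ?commg_subl //=.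
  exact: subset_trans (commSg _ (subsetIr _ _)) (ucn_comm _ _).
have [m Zm_eq] := ucnP P nilP.
apply: subset_trans (sNZ_up m); rewrite subsetI subxx /=.
by apply: subset_trans sNP _; rewrite -{1}Zm_eq ucn_sub_geq ?leq_addr.
Qed.

Lemma pgroup_sub_chain p K (X : nat -> {group gT}) :
    p.-group K -> (forall j, X j \subset X j.+1) ->
    (forall j, ~~ (K \subset X j) -> K :&: X j \proper K :&: X j.+1) ->
  K \subset X (logn p #|K|).
Proof.
move=> pK sXS ltXS.
have pKX j : p.-group (K :&: X j) := pgroupS (subsetIl _ _) pK.
have grow j : ~~ (K \subset X j) -> j <= logn p #|K :&: X j|.
  elim: j => [|j IHj] // sKXS.
  have sKX : ~~ (K \subset X j) by apply: contra sKXS => /subset_trans->.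
  exact: leq_ltn_trans (IHj sKX) (properG_ltn_log (pKX _) (ltXS j sKX)).
apply/negPn/negP => sKX; have := grow _ sKX; rewrite leqNgt.
rewrite (properG_ltn_log pK) // properEneq subsetIl andbT.
by apply: contra sKX => /eqP/setIidPl.
Qed.

Section CommutatorWithH.
Variables P H : {group gT}.
Hypotheses (nPH : H \subset 'N(P)) (defP : [~: P, H] = P).

Lemma comm_sub_ucnS i N : N \subset P -> P \subset 'N(N) -> H \subset 'N(N) ->
  [~: N, H] \subset 'Z_i(P) -> N \subset 'Z_i.+1(P).
Proof.
move=> sNP nNP nNH sNHZ; rewrite sub_ucnS // commGC -{1}defP.
have nZP : P \subset 'N('Z_i(P)) := ucn_norm i P.
have nZH : H \subset 'N('Z_i(P)) := char_norm_trans (ucn_char i P) nPH.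
apply: (three_subgroup_mod nZH (subset_trans sNP nZP) nZP) => /=.
  by rewrite (commGC H N) (subset_trans (commSg _ sNHZ)) ?commg_subl.
by apply: subset_trans sNHZ; rewrite commSg ?commg_subl.
Qed.

Lemma commI_ucn_properSS i N : nilpotent P ->
    N \subset P -> P \subset 'N(N) -> H \subset 'N(N) ->
    ~~ ([~: N, H] \subset 'Z_i(P)) ->
  [~: N, H] :&: 'Z_i(P) \proper [~: N, H] :&: 'Z_i.+2(P).
Proof.
move=> nilP sNP nNP nNH sNHZ.
rewrite properE setIS ?(ucn_sub_geq _ (ltnW (leqnSn _))) //=.
apply: contra sNHZ => sKZ2.
set V := (N :&: 'Z_i.+2(P))%G.
have sVP : V \subset P by rewrite subIset ?sNP.
have nVP : P \subset 'N(V) by rewrite normsI ?ucn_norm.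
have nVH : H \subset 'N(V) by rewrite normsI ?(char_norm_trans (ucn_char _ P)).
have sVHZ : [~: V, H] \subset [~: N, H] :&: 'Z_i.+2(P).
  rewrite subsetI commSg ?subsetIl //=.
  by apply: subset_trans (subsetIr N _); rewrite commg_subl.
have sVHZi : [~: V, H] \subset 'Z_i(P).
  by apply: subset_trans sVHZ (subset_trans sKZ2 (subsetIr _ _)).
have sNZ1 : N \subset 'Z_i.+1(P).
  by apply: sub_ucn_meetS => //; exact: comm_sub_ucnS sVP nVP nVH sVHZi.
have sNV : N \subset V by rewrite subsetI subxx (subset_trans sNZ1) ?ucn_subS.
exact: subset_trans (commSg H sNV) sVHZi.
Qed.

End CommutatorWithH.

End UpperCentralSeries.

Theorem lemma2p8 (gT : finGroupType) (q p n : nat)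
  (A G P H N : {group gT}) :
  prime q -> exponent A = q -> #|A| = (q ^ 3)%N ->
  A \subset 'N(G) -> coprime #|G| q ->
  P * H = G ->
  A \subset 'N(P) -> A \subset 'N(H) ->
  prime p -> P <| G -> p.-group P ->
  nilpotent H -> p^'.-group H ->
  N <| P -> H \subset 'N(N) -> A \subset 'N(N) ->
  [~: P, H] = P -> #|[~: N, H]| = (p ^ n)%N ->
  N \subset 'Z_(2 * n + 1)(P).
Proof.
move=> _ _ _ _ _ defG _ _ p_pr nsPG pP _ _ /andP[sNP nNP] nNH _ defP oNH.
have nPH : H \subset 'N(P).
  by apply: subset_trans (normal_norm nsPG); rewrite -defG mulG_subr.
have nilP := pgroup_nil pP.
have pNH : p.-group [~: N, H].
  by apply: pgroupS pP; apply: subset_trans sNP; rewrite commg_subl.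
rewrite addn1 mul2n; apply: (comm_sub_ucnS nPH defP sNP nNP nNH).
rewrite -(pfactorK n p_pr) -oNH.
apply: (pgroup_sub_chain (X := fun j => 'Z_j.*2(P)%G) pNH) => j.
  by rewrite ucn_sub_geq // leq_double.
by rewrite doubleS; exact: commI_ucn_properSS.
Qed.
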